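(* Let $q:V\to\overline K/\overline R$ be a non-trivial generalized $(\sigma,\varepsilon)$-quadratic form with sesquilinearization $f$ such that $P_q$ spans $\mathrm{PG}(V)$, and let $U\subseteq\mathrm{Rad}(f)$ be a subspace with $U\cap\mathrm{Rad}(q)=\{0\}$. Then $q_U:V/U\to\overline K/\overline R_U$ is a well-defined generalized $(\sigma,\varepsilon)$-quadratic form with sesquilinearization $f_U$, and, with $\pi_U:V\to V/U$ the projection: (1) if $q_U$ is non-trivial, $\pi_U$ induces an isomorphism of point-line geometries from $S_q$ onto $S_{q_U}$; (2) if $q_U$ is trivial, then both $f$ and $f_U$ are alternating and $\pi_U$ induces an isomorphism from $S_q$ onto the polar space $S_{f_U}$.
   Context: $K$ division ring, $(\sigma,\varepsilon)$ admissible pair ($\sigma$ anti-automorphism, $\varepsilon^\sigma\varepsilon=1$, $t^{\sigma^2}=\varepsilon t\varepsilon^{-1}$). $K_{\sigma,\varepsilon}=\{t-t^\sigma\varepsilon\}$, $K^{\sigma,\varepsilon}=\{t:t=-t^\sigma\varepsilon\}$, $\overline K=K/K_{\sigma,\varepsilon}$, $\bar t$ class of $t$, $\bar t\circ\lambda=\overline{\lambda^\sigma t\lambda}$, $\overline K^\circ=K^{\sigma,\varepsilon}/K_{\sigma,\varepsilon}$ (a right $K$-vector space under $\circ$); closed subgroups: stable under all $\circ\lambda$; $(\bar t+\overline R)\circ\lambda=\bar t\circ\lambda+\overline R$. Generalized $(\sigma,\varepsilon)$-quadratic form with co-defect closed $\overline R$: $q:V\to\overline K/\overline R$ ($V$ right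 $K$-vector space) with $q(x\lambda)=q(x)\circ\lambda$ and trace-valued $(\sigma,\varepsilon)$-sesquilinear $f$ ($f(x\lambda,y\mu)=\lambda^\sigma f(x,y)\mu$, $f(y,x)=f(x,y)^\sigma\varepsilon$, $f(x,x)\in\{t+t^\sigma\varepsilon\}$) with $q(x+y)=q(x)+q(y)+(\overline{f(x,y)}+\overline R)$. For non-trivial $q$, $\overline R$ is a subspace of $\overline K^\circ$ and $q$ restricted to $\mathrm{Rad}(f)=\{x:f(x,V)=0\}$ is $K$-linear into $\overline K^\circ/\overline R$ with kernel $\mathrm{Rad}(q)=\{x\in\mathrm{Rad}(f):q(x)=\overline R\}$. Given $U$ as in the claim, $\overline R_U$ is the unique subspace of $\overline K^\circ$ containing $\overline R$ with $\overline R_U/\overline R=q(U)$; $q_U(x+U)=\bar t+\overline R_U$ where $\bar t+\overline R=q(x)$; $f_U(x+U,y+U)=f(x,y)$. Trivial: identically zero in the quotient. $S_q$ ($S_{q_U}$): points of the projective space represented by singular vectors and lines all of whose points are singular; $S_{f_U}$: points $[v]$ with $f_U(v,v)=0$ and lines on which $f_U$ vanishes identically. Alternating: $f(x,x)=0$ for all $x$. *)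

From HB Require Import structures.
From mathcomp Require Import all_boot all_order all_algebra.
Set Implicit Arguments. Unset Strict Implicit. Unset Printing Implicit Defensive.
Import GRing.Theory.
Local Open Scope ring_scope.

(* Conventions.
   - K : a division ring (unitRingType in which every nonzero element is a unit).
   - Right K-vector spaces are modelled as left modules over the converse ring K^c:
     the right product  x . lambda  is  rsc x lambda := (lambda : K^c) *: x.
   - Quotients of K by additive subgroups are modelled by representatives: a
     closed subgroup  Rbar  of  Kbar = K/K_{sigma,eps}  is represented by its
     preimage  R : K -> Prop  in K, and a map  q : V -> Kbar/Rbar  by a map
     Q : V -> K of representatives (equalities hold modulo R). *)

Section Defs.
Variable K : unitRingType.

Definition division_ring : Prop := forall x : K, x != 0 -> x \is a GRing.unit.

Definition anti_automorphism (sigma : K -> K) : Prop :=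
  [/\ forall x y, sigma (x + y) = sigma x + sigma y,
      forall x y, sigma (x * y) = sigma y * sigma x,
      sigma 1 = 1 & bijective sigma].

Definition admissible (sigma : K -> K) (eps : K) : Prop :=
  [/\ anti_automorphism sigma, sigma eps * eps = 1 &
      forall t, sigma (sigma t) = eps * t * eps^-1].

Definition Kse (sigma : K -> K) (eps : K) (t : K) : Prop :=
  exists s, t = s - sigma s * eps.

(* preimage R in K of a closed subgroup Rbar of Kbar = K / K_{sigma,eps}:
   an additive subgroup containing K_{sigma,eps}, stable under t |-> l^sigma t l *)
Definition closed_codefect (sigma : K -> K) (eps : K) (R : K -> Prop) : Prop :=
  [/\ R 0, forall a b, R a -> R b -> R (a - b),
      forall t, Kse sigma eps t -> R t &
      forall t l, R t -> R (sigma l * t * l)].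

Variable V : lmodType K^c.

Definition rsc (x : V) (l : K) : V := (l : K^c) *: x.

Definition sesquilinear (sigma : K -> K) (f : V -> V -> K) : Prop :=
  [/\ forall x x' y, f (x + x') y = f x y + f x' y,
      forall x y y', f x (y + y') = f x y + f x y' &
      forall x y l m, f (rsc x l) (rsc y m) = sigma l * f x y * m].

Definition trace_valued_form (sigma : K -> K) (eps : K) (f : V -> V -> K) : Prop :=
  [/\ sesquilinear sigma f,
      forall x y, f y x = sigma (f x y) * eps &
      forall x, exists t, f x x = t + sigma t * eps].

(* generalized (sigma,eps)-quadratic form q : V -> Kbar/Rbar, with co-defect
   Rbar (represented by R) and sesquilinearization f; q represented by Q *)
Definition gen_quad_form (sigma : K -> K) (eps : K) (R : K -> Prop)
    (Q : V -> K) (f : V -> V -> K) : Prop :=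
  [/\ closed_codefect sigma eps R,
      trace_valued_form sigma eps f,
      forall x l, R (Q (rsc x l) - sigma l * Q x * l) &
      forall x y, R (Q (x + y) - (Q x + Q y + f x y))].

Definition nontrivial (R : K -> Prop) (Q : V -> K) : Prop := exists x, ~ R (Q x).

Definition alternating (f : V -> V -> K) : Prop := forall x, f x x = 0.

Definition Rad_f (f : V -> V -> K) (x : V) : Prop := forall y, f x y = 0.
Definition Rad_q (R : K -> Prop) (Q : V -> K) (f : V -> V -> K) (x : V) : Prop :=
  Rad_f f x /\ R (Q x).

Definition subspace (U : V -> Prop) : Prop :=
  [/\ U 0, forall x y, U x -> U y -> U (x + y) & forall x l, U x -> U (rsc x l)].

Inductive span_of (S : V -> Prop) : V -> Prop :=
| span_zero : span_of S 0
| span_in x : S x -> span_of S x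
| span_add x y : span_of S x -> span_of S y -> span_of S (x + y)
| span_scale x l : span_of S x -> span_of S (rsc x l).

Definition same_set (A B : V -> Prop) : Prop := forall x, A x <-> B x.
Definition subset (A B : V -> Prop) : Prop := forall x, A x -> B x.

Definition span1 (v : V) : V -> Prop := fun x => exists l, x = rsc v l.
Definition span2 (v w : V) : V -> Prop :=
  fun x => exists l m, x = rsc v l + rsc w m.
Definition independent2 (v w : V) : Prop :=
  forall l m, rsc v l + rsc w m = 0 -> l = 0 /\ m = 0.

Definition is_point (p : V -> Prop) : Prop := exists v, v <> 0 /\ same_set p (span1 v).
Definition is_line (L : V -> Prop) : Prop :=
  exists v w, independent2 v w /\ same_set L (span2 v w).

Definition Sq_point (R : K -> Prop) (Q : V -> K) (p : V -> Prop) : Prop :=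
  exists v, [/\ v <> 0, same_set p (span1 v) & R (Q v)].
Definition Sq_line (R : K -> Prop) (Q : V -> K) (L : V -> Prop) : Prop :=
  is_line L /\ forall x, L x -> R (Q x).

Definition Sf_point (f : V -> V -> K) (p : V -> Prop) : Prop :=
  exists v, [/\ v <> 0, same_set p (span1 v) & f v v = 0].
Definition Sf_line (f : V -> V -> K) (L : V -> Prop) : Prop :=
  is_line L /\ forall x y, L x -> L y -> f x y = 0.

End Defs.

Definition image (K : unitRingType) (V W : lmodType K^c) (pi : V -> W)
  (A : V -> Prop) : W -> Prop := fun y => exists x, A x /\ pi x = y.

(* pi induces an isomorphism of point-line geometries (incidence = inclusion)
   from (Pt1, Ln1) onto (Pt2, Ln2), via  X |-> pi(X) on points and lines. *)
Definition induces_iso (K : unitRingType) (V W : lmodType K^c) (pi : V -> W)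
  (Pt1 Ln1 : (V -> Prop) -> Prop) (Pt2 Ln2 : (W -> Prop) -> Prop) : Prop :=
  (forall p, Pt1 p -> Pt2 (image pi p)) /\
      (forall p p', Pt1 p -> Pt1 p' ->
         same_set (image pi p) (image pi p') -> same_set p p') /\
      (forall p2, Pt2 p2 -> exists p, Pt1 p /\ same_set (image pi p) p2) /\
      (forall L, Ln1 L -> Ln2 (image pi L)) /\
      (forall L L', Ln1 L -> Ln1 L' ->
         same_set (image pi L) (image pi L') -> same_set L L') /\
      (forall L2, Ln2 L2 -> exists L, Ln1 L /\ same_set (image pi L) L2) /\
      (forall p L, Pt1 p -> Ln1 L ->
         (subset p L <-> subset (image pi p) (image pi L))).

(* R_U: preimage in K of Rbar_U = Rbar + q(U) *)
Definition R_U (K : unitRingType) (V : lmodType K^c) (R : K -> Prop) (Q : V -> K)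
  (U : V -> Prop) (t : K) : Prop := exists u, U u /\ R (t - Q u).

(* Since [U] lies in [Rad f], [q] is additive modulo [Rbar] on [U] and [2 q(u)]
   lies in [Rbar]; hence [Rbar + q(U)] is again a closed subgroup, [q_U] and [f_U]
   are well defined, and the axioms descend along [pi].  As [U] meets [Rad q]
   trivially, [pi] is injective on singular vectors, and a vector whose image is
   [q_U]-singular, i.e. whose value is [q(u)] modulo [Rbar] for some [u] in [U],
   becomes singular after subtracting [u].  So singular points and lines of
   [q_U] (resp. of [f_U]) lift uniquely, which gives the isomorphisms; a line of
   singular points is totally isotropic because otherwise [f(x,y) K] would lie in
   the codefect.  If [q_U] is trivial, every value of [f] lies in [Rbar_U]: when
   that is a proper subgroup this forces [f = 0]; otherwise every element [t] of
   [K] satisfies [t mu + mu^sigma t] in [Rbar] for all [mu] (true separately on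
   [Rbar] and on [q(U)]), which makes each trace [t + t^sigma eps], in particular
   each [f(x,x)], vanish. *)

From HB Require Import structures.
From Stdlib Require Import Classical.
From mathcomp Require Import all_boot all_order all_algebra.
Set Implicit Arguments. Unset Strict Implicit. Unset Printing Implicit Defensive.
Import GRing.Theory.
Local Open Scope ring_scope.

Section RightScaling.
Variables (K : unitRingType) (V : lmodType K^c).

Lemma rsc0 (x : V) : rsc x 0 = 0. Proof. exact: scale0r. Qed.
Lemma rsc1 (x : V) : rsc x 1 = x. Proof. exact: scale1r. Qed.
Lemma rscN1 (x : V) : rsc x (-1) = - x. Proof. exact: scaleN1r. Qed.
Lemma rscDl (x : V) l m : rsc x (l + m) = rsc x l + rsc x m. Proof. exact: scalerDl. Qed.
Lemma rscDr (x y : V) l : rsc (x + y) l = rsc x l + rsc y l. Proof. exact: scalerDr. Qed.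
Lemma rscA (x : V) l m : rsc (rsc x l) m = rsc x (l * m). Proof. exact: scalerA. Qed.

Lemma linear_rsc (W : lmodType K^c) (pi : {linear V -> W}) x l :
  pi (rsc x l) = rsc (pi x) l.
Proof. exact: linearZ. Qed.

End RightScaling.

Section DivisionRing.
Variables (K : unitRingType) (P : K -> Prop).
Hypotheses (HK : division_ring K) (Pproper : ~ (forall k, P k)).

Lemma eq0_of_proper_mulr c : (forall m, P (c * m)) -> c = 0.
Proof.
move=> Pc; case: (c =P 0) => // /eqP /HK cU; case: Pproper => k.
by have := Pc (c^-1 * k); rewrite mulrA mulrV // mul1r.
Qed.

Lemma eq0_of_proper_mull c : (forall m, P (m * c)) -> c = 0.
Proof.
move=> Pc; case: (c =P 0) => // /eqP /HK cU; case: Pproper => k.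
by have := Pc (k * c^-1); rewrite -mulrA mulVr // mulr1.
Qed.

End DivisionRing.

Section AntiAutomorphism.
Variables (K : unitRingType) (sigma : K -> K).
Hypothesis Hs : anti_automorphism sigma.

Lemma antiD x y : sigma (x + y) = sigma x + sigma y. Proof. by case: Hs. Qed.
Lemma antiM x y : sigma (x * y) = sigma y * sigma x. Proof. by case: Hs. Qed.
Lemma anti1 : sigma 1 = 1. Proof. by case: Hs. Qed.
Lemma anti_surj y : exists x, sigma x = y.
Proof. by case: Hs => _ _ _ [g _ gK]; exists (g y). Qed.

Lemma anti0 : sigma 0 = 0.
Proof. by apply: (addrI (sigma 0)); rewrite -antiD !addr0. Qed.

Lemma antiN x : sigma (- x) = - sigma x.
Proof. by apply: (addrI (sigma x)); rewrite -antiD !subrr anti0. Qed.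

Lemma anti_conj1D t mu :
  sigma (1 + mu) * t * (1 + mu) - (t + sigma mu * t * mu) = t * mu + sigma mu * t.
Proof.
rewrite antiD anti1 mulrDl mul1r mulrDr mulr1 mulrDl.
apply/eqP; rewrite subr_eq addrACA [X in _ == X]addrACA.
by rewrite [t * mu + t]addrC.
Qed.

End AntiAutomorphism.

Section AdditiveSubgroup.
Variables (Z : zmodType) (R : Z -> Prop).

Definition additive_subgroup : Prop := R 0 /\ forall a b, R a -> R b -> R (a - b).
Definition eqmod (a b : Z) : Prop := R (a - b).

Hypothesis HR : additive_subgroup.

Lemma subgroup0 : R 0. Proof. by case: HR. Qed.
Lemma subgroupB a b : R a -> R b -> R (a - b). Proof. by case: HR => _; apply. Qed.
Lemma subgroupN a : R a -> R (- a).
Proof. by move=> Ra; rewrite -sub0r; apply: subgroupB => //; apply: subgroup0. Qed.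
Lemma subgroupD a b : R a -> R b -> R (a + b).
Proof. by move=> Ra Rb; rewrite -[b]opprK; apply/subgroupB/subgroupN. Qed.

Lemma subgroupDl a b : R a -> R (a + b) <-> R b.
Proof.
move=> Ra; split=> [Rab | Rb]; last exact: subgroupD.
by have := subgroupB Rab Ra; rewrite addrC addKr.
Qed.

Lemma eqmod_refl a : eqmod a a. Proof. by rewrite /eqmod subrr; apply: subgroup0. Qed.
Lemma eqmod_sym a b : eqmod a b -> eqmod b a.
Proof. by move=> hab; rewrite /eqmod -opprB; apply: subgroupN. Qed.
Lemma eqmod_trans b a c : eqmod a b -> eqmod b c -> eqmod a c.
Proof. by move=> hab hbc; have := subgroupD hab hbc; rewrite addrA subrK. Qed.
Lemma eqmodD a a' b b' : eqmod a a' -> eqmod b b' -> eqmod (a + b) (a' + b').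
Proof. by move=> ha hb; rewrite /eqmod opprD addrACA; apply: subgroupD. Qed.
Lemma eqmodN a b : eqmod a b -> eqmod (- a) (- b).
Proof. by move=> hab; rewrite /eqmod -opprD; apply: subgroupN. Qed.
Lemma eqmod_mem a b : eqmod a b -> R a <-> R b.
Proof.
move=> hab; split=> h; last by have := subgroupD hab h; rewrite subrK.
by have := subgroupB h hab; rewrite opprB addrC subrK.
Qed.
Lemma eqmod0 a : eqmod a 0 <-> R a. Proof. by rewrite /eqmod subr0. Qed.

End AdditiveSubgroup.
Arguments subgroupDl {Z R} HR {a b}.

Section Spans.
Variables (K : unitRingType) (V : lmodType K^c).
Implicit Types v w x y : V.

Lemma same_set_sym (A B : V -> Prop) : same_set A B -> same_set B A.
Proof. by move=> AB x; split=> /AB. Qed.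

Lemma same_set_trans (A B C : V -> Prop) :
  same_set A B -> same_set B C -> same_set A C.
Proof. by move=> AB BC x; split=> [/AB/BC | /BC/AB]. Qed.

Lemma span2_mem v w l m : span2 v w (rsc v l + rsc w m). Proof. by exists l, m. Qed.
Lemma span2_l v w : span2 v w v. Proof. by exists 1, 0; rewrite rsc1 rsc0 addr0. Qed.
Lemma span2_r v w : span2 v w w. Proof. by exists 0, 1; rewrite rsc1 rsc0 add0r. Qed.

Lemma span2D v w x y : span2 v w x -> span2 v w y -> span2 v w (x + y).
Proof.
move=> [l [m ->]] [l' [m' ->]]; exists (l + l'), (m + m').
by rewrite !rscDl addrACA.
Qed.

Lemma span2_rsc v w x n : span2 v w x -> span2 v w (rsc x n).
Proof. by move=> [l [m ->]]; exists (l * n), (m * n); rewrite rscDr !rscA. Qed.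

End Spans.

Section Codefect.
Variables (K : unitRingType) (sigma : K -> K) (eps : K) (R : K -> Prop).
Hypotheses (Hs : anti_automorphism sigma) (HR : closed_codefect sigma eps R).

Lemma codefect_subgroup : additive_subgroup R.
Proof. by case: HR. Qed.

Lemma codefect_trace s : R (s - sigma s * eps).
Proof. by case: HR => _ _ + _; apply; exists s. Qed.

Lemma codefect_conj t l : R t -> R (sigma l * t * l).
Proof. by case: HR => _ _ _; apply. Qed.

Lemma eqmod_conj a b l : eqmod R a b -> eqmod R (sigma l * a * l) (sigma l * b * l).
Proof. by rewrite /eqmod -mulrBl -mulrBr; apply: codefect_conj. Qed.

Lemma symmetrize_of_eqmod t mu :
  eqmod R (sigma (1 + mu) * t * (1 + mu)) (t + sigma mu * t * mu) ->
  R (t * mu + sigma mu * t).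
Proof. by rewrite /eqmod anti_conj1D. Qed.

Lemma codefect_symmetrize r mu : R r -> R (r * mu + sigma mu * r).
Proof.
move=> Rr; apply: symmetrize_of_eqmod; rewrite /eqmod.
apply: (subgroupB codefect_subgroup); first exact: codefect_conj.
by apply: (subgroupD codefect_subgroup) => //; apply: codefect_conj.
Qed.

Hypothesis HK : division_ring K.

(* [sigma mu * (t + sigma t * eps)] is [t * mu + sigma mu * t] minus the trace
   element [t * mu - sigma (t * mu) * eps]; as [sigma] is onto, a nonzero
   [t + sigma t * eps] would put all of [K] into [R]. *)
Lemma trace_zero_of_symmetrize t :
  ~ (forall k, R k) -> (forall mu, R (t * mu + sigma mu * t)) ->
  t + sigma t * eps = 0.
Proof.
move=> Rproper Rsym; apply: (eq0_of_proper_mull HK Rproper) => m.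
have [mu <-] := anti_surj Hs m.
have := subgroupB codefect_subgroup (Rsym mu) (codefect_trace (t * mu)).
by rewrite opprB addrC addrA subrK addrC (antiM Hs) mulrDr mulrA.
Qed.

End Codefect.

Section Nontrivial.
Variables (K : unitRingType) (V : lmodType K^c) (R : K -> Prop) (Q : V -> K).

Lemma nontrivial_proper : nontrivial R Q -> ~ (forall k, R k).
Proof. by move=> [x Rx] Rall; apply/Rx/Rall. Qed.

Lemma trivial_singular : ~ nontrivial R Q -> forall x, R (Q x).
Proof. by move=> Qtriv x; apply: NNPP => Rx; apply: Qtriv; exists x. Qed.

End Nontrivial.

Section GenQuadForm.
Variables (K : unitRingType) (sigma : K -> K) (eps : K).
Hypothesis Hs : anti_automorphism sigma.
Variables (V : lmodType K^c) (R : K -> Prop) (Q : V -> K) (f : V -> V -> K).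
Hypothesis Hq : gen_quad_form sigma eps R Q f.

Lemma gqf_codefect : closed_codefect sigma eps R. Proof. by case: Hq. Qed.
Lemma gqfZ x l : eqmod R (Q (rsc x l)) (sigma l * Q x * l).
Proof. by case: Hq => _ _ + _; apply. Qed.
Lemma gqfD x y : eqmod R (Q (x + y)) (Q x + Q y + f x y).
Proof. by case: Hq => _ _ _; apply. Qed.

Lemma formDl x x' y : f (x + x') y = f x y + f x' y. Proof. by case: Hq => _ [[]]. Qed.
Lemma formDr x y y' : f x (y + y') = f x y + f x y'. Proof. by case: Hq => _ [[]]. Qed.
Lemma formZ x y l m : f (rsc x l) (rsc y m) = sigma l * f x y * m.
Proof. by case: Hq => _ [[]]. Qed.
Lemma form_herm x y : f y x = sigma (f x y) * eps. Proof. by case: Hq => _ []. Qed.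
Lemma form_trace x : exists t, f x x = t + sigma t * eps. Proof. by case: Hq => _ []. Qed.

Lemma formZr x y m : f x (rsc y m) = f x y * m.
Proof. by rewrite -{1}(rsc1 x) formZ (anti1 Hs) mul1r. Qed.

Local Notation HRg := (codefect_subgroup gqf_codefect).

Lemma gqf0 : R (Q 0).
Proof. by have := gqfZ 0 0; rewrite rsc0 mulr0 => /eqmod0. Qed.

Lemma gqfN x : eqmod R (Q (- x)) (Q x).
Proof. by have := gqfZ x (-1); rewrite rscN1 (antiN Hs) (anti1 Hs) mulN1r mulrN1 opprK. Qed.

Lemma singular_rsc x l : R (Q x) -> R (Q (rsc x l)).
Proof.
by move=> Rx; apply/(eqmod_mem HRg (gqfZ x l)); apply: codefect_conj gqf_codefect _ _ Rx.
Qed.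

Lemma rad_formr u x : Rad_f f u -> f x u = 0.
Proof. by move=> u_rad; rewrite form_herm u_rad (anti0 Hs) mul0r. Qed.

Lemma gqfD_rad x u : Rad_f f u -> eqmod R (Q (x + u)) (Q x + Q u).
Proof. by move=> u_rad; have := gqfD x u; rewrite rad_formr // addr0. Qed.

(* [Q 0 = Q (- u + u)] is congruent to [Q (- u) + Q u], hence to [Q u + Q u]. *)
Lemma rad_double u : Rad_f f u -> R (Q u + Q u).
Proof.
move=> u_rad; apply: (eqmod_mem HRg _).1 gqf0.
rewrite -(addNr u); apply: (eqmod_trans HRg (gqfD_rad (- u) u_rad)).
exact: (eqmodD HRg (gqfN u) (eqmod_refl HRg (Q u))).
Qed.

Lemma rad_Qopp u : Rad_f f u -> eqmod R (- Q u) (Q u).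
Proof. by move=> u_rad; rewrite /eqmod -opprD; apply/(subgroupN HRg)/rad_double. Qed.

Lemma rad_symmetrize u mu : Rad_f f u -> R (Q u * mu + sigma mu * Q u).
Proof.
move=> u_rad; apply: (symmetrize_of_eqmod Hs).
apply: (eqmod_trans HRg (eqmod_sym HRg (gqfZ u (1 + mu)))).
rewrite rscDl rsc1 addrC [Q u + _]addrC.
apply: (eqmod_trans HRg (gqfD_rad _ u_rad)).
exact: (eqmodD HRg (gqfZ u mu) (eqmod_refl HRg (Q u))).
Qed.

Lemma form_mem_of_singular x y : R (Q x) -> R (Q y) -> R (Q (x + y)) -> R (f x y).
Proof.
move=> Rx Ry Rxy; apply: (subgroupDl HRg (subgroupD HRg Rx Ry)).1.
exact: (eqmod_mem HRg (gqfD x y)).1 Rxy.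
Qed.

Lemma Sq_point_singular p x : Sq_point R Q p -> p x -> R (Q x).
Proof. by move=> [v [_ pv Rv]] /pv [l ->]; apply: singular_rsc. Qed.

Hypothesis HK : division_ring K.

Lemma form_eq0_of_singular_line x y :
  ~ (forall k, R k) -> R (Q x) -> R (Q y) -> (forall m, R (Q (x + rsc y m))) ->
  f x y = 0.
Proof.
move=> Rproper Rx Ry Rxy; apply: (eq0_of_proper_mulr HK Rproper) => m.
by rewrite -formZr; apply: form_mem_of_singular (singular_rsc m Ry) (Rxy m).
Qed.

Lemma Sq_line_isotropic L x y :
  ~ (forall k, R k) -> Sq_line R Q L -> L x -> L y -> f x y = 0.
Proof.
move=> Rproper [[v [w [_ Lvw]]] L_sing] Lx Ly.
apply: (form_eq0_of_singular_line Rproper (L_sing _ Lx) (L_sing _ Ly)) => m.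
by apply/L_sing/Lvw/span2D; [apply/Lvw | apply/span2_rsc/Lvw].
Qed.

End GenQuadForm.

Section Image.
Variables (K : unitRingType) (V W : lmodType K^c) (pi : {linear V -> W}).

Lemma image_same_set (A B : V -> Prop) :
  same_set A B -> same_set (image pi A) (image pi B).
Proof. by move=> AB y; split=> -[x [/AB Ax <-]]; exists x. Qed.

Lemma image_span1 v : same_set (image pi (span1 v)) (span1 (pi v)).
Proof.
move=> y; split; first by move=> [x [[l ->] <-]]; exists l; rewrite linear_rsc.
by move=> [l ->]; exists (rsc v l); split; [exists l | rewrite linear_rsc].
Qed.

Lemma image_span2 v w : same_set (image pi (span2 v w)) (span2 (pi v) (pi w)).
Proof.
move=> y; split.
  by move=> [x [[l [m ->]] <-]]; exists l, m; rewrite linearD !linear_rsc.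
move=> [l [m ->]]; exists (rsc v l + rsc w m); split; first exact: span2_mem.
by rewrite linearD !linear_rsc.
Qed.

Lemma surj_section :
  (forall w, exists x, pi x = w) -> exists s : W -> V, forall w, pi (s w) = w.
Proof.
move=> pi_surj; have pi_surjb w : exists x, pi x == w by have [x <-] := pi_surj w; exists x.
by exists (fun w => xchoose (pi_surjb w)) => w; apply/eqP/(xchooseP (pi_surjb w)).
Qed.

Variable S : V -> Prop.
Hypothesis pi_injS : forall x y, S x -> S y -> pi x = pi y -> x = y.

Lemma image_subsetE (A B : V -> Prop) : subset A S -> subset B S ->
  (subset A B <-> subset (image pi A) (image pi B)).
Proof.
move=> AS BS; split; first by move=> AB y [x [/AB Bx <-]]; exists x.
move=> AB x Ax; have [y [By pi_yx]] : image pi B (pi x) by apply: AB; exists x.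
by rewrite -(pi_injS (BS _ By) (AS _ Ax) pi_yx).
Qed.

Lemma image_same_setK (A B : V -> Prop) : subset A S -> subset B S ->
  same_set (image pi A) (image pi B) -> same_set A B.
Proof.
move=> AS BS AB x; split.
  by apply: (image_subsetE AS BS).2 => y /AB.
by apply: (image_subsetE BS AS).2 => y /AB.
Qed.

End Image.

Section Subspace.
Variables (K : unitRingType) (V : lmodType K^c) (U : V -> Prop).
Hypothesis HU : subspace U.

Lemma subspace0 : U 0. Proof. by case: HU. Qed.
Lemma subspaceD x y : U x -> U y -> U (x + y). Proof. by case: HU => _ + _; apply. Qed.
Lemma subspace_rsc x l : U x -> U (rsc x l). Proof. by case: HU => _ _; apply. Qed.
Lemma subspaceN x : U x -> U (- x).
Proof. by move=> Ux; rewrite -rscN1; apply: subspace_rsc. Qed.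

End Subspace.

Section QuotientCodefect.
Variables (K : unitRingType) (sigma : K -> K) (eps : K).
Hypothesis Hs : anti_automorphism sigma.
Variables (V : lmodType K^c) (R : K -> Prop) (Q : V -> K) (f : V -> V -> K).
Hypothesis Hq : gen_quad_form sigma eps R Q f.
Variable U : V -> Prop.
Hypotheses (HU : subspace U) (HUf : forall u, U u -> Rad_f f u).

Local Notation RU := (R_U R Q U).
Local Notation HRg := (codefect_subgroup (gqf_codefect Hq)).

Lemma R_U_of_R t : R t -> RU t.
Proof.
by move=> Rt; exists 0; split; [apply: subspace0 | exact: (subgroupB HRg Rt (gqf0 Hq))].
Qed.

Lemma R_U_codefect : closed_codefect sigma eps RU.
Proof.
split.
- exact/R_U_of_R/(subgroup0 HRg).
- move=> a b [u [Uu Ra]] [u' [Uu' Rb]]; exists (u + u'); split; first exact: subspaceD.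
  apply: (eqmod_trans HRg (eqmodD HRg Ra (eqmodN HRg Rb))).
  apply: (eqmod_trans HRg (eqmodD HRg (eqmod_refl HRg (Q u)) (rad_Qopp Hs Hq (HUf Uu')))).
  exact: (eqmod_sym HRg (gqfD_rad Hs Hq u (HUf Uu'))).
- by move=> t [s ->]; apply/R_U_of_R/(codefect_trace (gqf_codefect Hq)).
- move=> t l [u [Uu Rt]]; exists (rsc u l); split; first exact: subspace_rsc.
  exact: (eqmod_trans HRg (eqmod_conj (gqf_codefect Hq) l Rt) (eqmod_sym HRg (gqfZ Hq u l))).
Qed.

Lemma R_U_symmetrize t mu : RU t -> R (t * mu + sigma mu * t).
Proof.
move=> [u [Uu Rt]]; rewrite -(subrK (Q u) t) mulrDl mulrDr addrACA.
apply: (subgroupD HRg); first exact: (codefect_symmetrize Hs (gqf_codefect Hq) mu Rt).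
exact: (rad_symmetrize Hs Hq mu (HUf Uu)).
Qed.

Variables (W : lmodType K^c) (pi : {linear V -> W}).
Hypothesis Hpi_ker : forall x, pi x = 0 <-> U x.

Lemma pi_eq_subspace x y : pi x = pi y -> U (x - y).
Proof. by move=> pi_xy; apply/Hpi_ker; rewrite linearB pi_xy subrr. Qed.

Lemma Q_fibre x y : pi x = pi y -> eqmod RU (Q x) (Q y).
Proof.
move=> /pi_eq_subspace Uxy; exists (x - y); split=> //.
have := gqfD_rad Hs Hq y (HUf Uxy); rewrite [y + _]addrC subrK.
by rewrite /eqmod opprD addrA.
Qed.

Lemma form_fibre x x' y y' : pi x = pi x' -> pi y = pi y' -> f x y = f x' y'.
Proof.
move=> /pi_eq_subspace Ux /pi_eq_subspace Uy.
rewrite -(subrK x' x) -(subrK y' y) (formDl Hq) (HUf Ux) add0r.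
by rewrite (formDr Hq) (rad_formr Hs Hq _ (HUf Uy)) add0r.
Qed.

Lemma quotient_form_exists : (forall w, exists x, pi x = w) ->
  exists (QU : W -> K) (fU : W -> W -> K),
    (forall x, RU (QU (pi x) - Q x)) /\ (forall x y, fU (pi x) (pi y) = f x y).
Proof.
move=> /surj_section [s pi_s]; exists (fun w => Q (s w)), (fun w w' => f (s w) (s w')).
by split=> [x | x y]; [apply: Q_fibre (pi_s _) | apply: form_fibre (pi_s _) (pi_s _)].
Qed.

Hypothesis HUq : forall x, U x -> Rad_q R Q f x -> x = 0.

Lemma pi_inj_singular x y : R (Q x) -> R (Q y) -> pi x = pi y -> x = y.
Proof.
move=> Rx Ry /pi_eq_subspace Uxy; apply/eqP; rewrite -subr_eq0; apply/eqP.
apply: HUq => //; split; first exact: HUf.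
apply: (subgroupDl HRg Ry).1; apply: (eqmod_mem HRg (gqfD_rad Hs Hq y (HUf Uxy))).1.
by rewrite [y + _]addrC subrK.
Qed.

Lemma lift_singular a : RU (Q a) -> exists2 v, pi v = pi a & R (Q v).
Proof.
move=> [u [Uu Ra]]; exists (a - u); first by rewrite linearB (Hpi_ker u).2 // subr0.
apply: (eqmod_mem HRg _).2 Ra.
apply: (eqmod_trans HRg (gqfD_rad Hs Hq a (HUf (subspaceN HU Uu)))).
apply: (eqmodD HRg (eqmod_refl HRg (Q a))).
exact: (eqmod_trans HRg (gqfN Hs Hq u) (eqmod_sym HRg (rad_Qopp Hs Hq (HUf Uu)))).
Qed.

End QuotientCodefect.

Section QuotientForm.
Variables (K : unitRingType) (sigma : K -> K) (eps : K).
Hypothesis Hs : anti_automorphism sigma.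
Variables (V : lmodType K^c) (R : K -> Prop) (Q : V -> K) (f : V -> V -> K).
Hypothesis Hq : gen_quad_form sigma eps R Q f.
Variable U : V -> Prop.
Hypotheses (HU : subspace U) (HUf : forall u, U u -> Rad_f f u).
Variables (W : lmodType K^c) (pi : {linear V -> W}).
Hypothesis Hpi_surj : forall w : W, exists x, pi x = w.
Variables (QU : W -> K) (fU : W -> W -> K).
Hypothesis HQU : forall x, R_U R Q U (QU (pi x) - Q x).
Hypothesis HfU : forall x y, fU (pi x) (pi y) = f x y.

Local Notation RU := (R_U R Q U).
Local Notation HRUc := (R_U_codefect Hs Hq HU HUf).
Local Notation HRUg := (codefect_subgroup HRUc).

Lemma quotient_form : trace_valued_form sigma eps fU.
Proof.
split; first split.
- move=> w w' y; have [x <-] := Hpi_surj w; have [x' <-] := Hpi_surj w'.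
  by have [z <-] := Hpi_surj y; rewrite -linearD !HfU (formDl Hq).
- move=> w y y'; have [x <-] := Hpi_surj w; have [z <-] := Hpi_surj y.
  by have [z' <-] := Hpi_surj y'; rewrite -linearD !HfU (formDr Hq).
- move=> w y l m; have [x <-] := Hpi_surj w; have [z <-] := Hpi_surj y.
  by rewrite -!linear_rsc !HfU (formZ Hq).
- move=> w y; have [x <-] := Hpi_surj w; have [z <-] := Hpi_surj y.
  by rewrite !HfU (form_herm Hq).
- by move=> w; have [x <-] := Hpi_surj w; rewrite HfU; apply: (form_trace Hq).
Qed.

Lemma quotient_gqf : gen_quad_form sigma eps RU QU fU.
Proof.
split; [exact: HRUc | exact: quotient_form | |].
- move=> w l; have [x <-] := Hpi_surj w; rewrite -linear_rsc.
  apply: (eqmod_trans HRUg (HQU (rsc x l))).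
  apply: (eqmod_trans HRUg (R_U_of_R Hq HU (gqfZ Hq x l))).
  exact: (eqmod_conj HRUc l (eqmod_sym HRUg (HQU x))).
- move=> w w'; have [x <-] := Hpi_surj w; have [y <-] := Hpi_surj w'.
  rewrite -linearD HfU; apply: (eqmod_trans HRUg (HQU (x + y))).
  apply: (eqmod_trans HRUg (R_U_of_R Hq HU (gqfD Hq x y))).
  apply: (eqmodD HRUg _ (eqmod_refl HRUg (f x y))).
  exact: (eqmodD HRUg (eqmod_sym HRUg (HQU x)) (eqmod_sym HRUg (HQU y))).
Qed.

Lemma quotient_singular x : RU (QU (pi x)) <-> RU (Q x).
Proof. exact: (eqmod_mem HRUg (HQU x)). Qed.

Lemma quotient_alternating : alternating f -> alternating fU.
Proof. by move=> f_alt w; have [x <-] := Hpi_surj w; rewrite HfU f_alt. Qed.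

Hypothesis Hpi_ker : forall x, pi x = 0 <-> U x.

Lemma lift_quotient_singular w : RU (QU w) -> exists2 v, pi v = w & R (Q v).
Proof.
by have [x <-] := Hpi_surj w => /quotient_singular /(lift_singular Hs Hq HU HUf Hpi_ker).
Qed.

End QuotientForm.

Section Isomorphism.
Variables (K : unitRingType) (sigma : K -> K) (eps : K).
Hypothesis Hs : anti_automorphism sigma.
Variables (V : lmodType K^c) (R : K -> Prop) (Q : V -> K) (f : V -> V -> K).
Hypothesis Hq : gen_quad_form sigma eps R Q f.
Variable U : V -> Prop.
Hypotheses (HU : subspace U) (HUf : forall u, U u -> Rad_f f u).
Hypothesis HUq : forall x, U x -> Rad_q R Q f x -> x = 0.
Variables (W : lmodType K^c) (pi : {linear V -> W}).
Hypothesis Hpi_surj : forall w : W, exists x, pi x = w.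
Hypothesis Hpi_ker : forall x, pi x = 0 <-> U x.
Variables (QU : W -> K) (fU : W -> W -> K).
Hypothesis HQU : forall x, R_U R Q U (QU (pi x) - Q x).
Hypothesis HfU : forall x y, fU (pi x) (pi y) = f x y.

Local Notation RU := (R_U R Q U).
Local Notation HRg := (codefect_subgroup (gqf_codefect Hq)).
Local Notation pi_injS := (pi_inj_singular Hs Hq HUf Hpi_ker HUq).
Local Notation lift := (lift_quotient_singular Hs Hq HU HUf Hpi_surj HQU Hpi_ker).

Lemma pi_singular_neq0 v : R (Q v) -> v <> 0 -> pi v <> 0.
Proof. by move=> Rv v_neq0 /Hpi_ker Uv; apply/v_neq0/HUq => //; split; first exact: HUf. Qed.

Lemma Sq_point_image p : Sq_point R Q p ->
  exists v, [/\ R (Q v), pi v <> 0 & same_set (image pi p) (span1 (pi v))].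
Proof.
move=> [v [v_neq0 pv Rv]]; exists v; split=> //; first exact: pi_singular_neq0.
exact: (same_set_trans (image_same_set pi pv) (image_span1 pi v)).
Qed.

Lemma Sq_line_image L : Sq_line R Q L -> is_line (image pi L).
Proof.
move=> [[v [w [vw_ind Lvw]]] L_sing]; exists (pi v), (pi w); split; last first.
  exact: (same_set_trans (image_same_set pi Lvw) (image_span2 pi v w)).
move=> l m vw0; have Ulm : U (rsc v l + rsc w m).
  by apply/Hpi_ker; rewrite linearD !linear_rsc.
apply/vw_ind/HUq => //; split; first exact: HUf.
exact/L_sing/Lvw/span2_mem.
Qed.

Lemma Sq_point_of_lift w : w <> 0 -> RU (QU w) ->
  exists p, Sq_point R Q p /\ same_set (image pi p) (span1 w).
Proof.
move=> w_neq0 /lift [v pi_v Rv]; exists (span1 v); split.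
  by exists v; split=> // v0; apply: w_neq0; rewrite -pi_v v0 linear0.
by rewrite -pi_v; apply: image_span1.
Qed.

Lemma Sq_line_of_lift a b : independent2 a b -> RU (QU a) -> RU (QU b) -> fU a b = 0 ->
  exists L, Sq_line R Q L /\ same_set (image pi L) (span2 a b).
Proof.
move=> ab_ind /lift [v pi_v Rv] /lift [w pi_w Rw]; subst a b; rewrite HfU => fvw.
exists (span2 v w); split; last exact: image_span2.
split.
  exists v, w; split=> // l m vw0; apply: ab_ind.
  by have := congr1 pi vw0; rewrite linearD !linear_rsc linear0.
move=> _ [l [m ->]]; apply: (eqmod_mem HRg (gqfD Hq _ _)).2.
rewrite (formZ Hq) fvw mulr0 mul0r addr0.
exact: (subgroupD HRg (singular_rsc Hq l Rv) (singular_rsc Hq m Rw)).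
Qed.

Lemma induces_iso_of_lifts (Pt2 Ln2 : (W -> Prop) -> Prop) :
  (forall p, Sq_point R Q p -> Pt2 (image pi p)) ->
  (forall L, Sq_line R Q L -> Ln2 (image pi L)) ->
  (forall p2, Pt2 p2 -> exists w, [/\ w <> 0, same_set p2 (span1 w) & RU (QU w)]) ->
  (forall L2, Ln2 L2 -> exists a b, [/\ independent2 a b, same_set L2 (span2 a b),
                                      RU (QU a), RU (QU b) & fU a b = 0]) ->
  induces_iso pi (Sq_point R Q) (Sq_line R Q) Pt2 Ln2.
Proof.
move=> Pt_image Ln_image Pt_lift Ln_lift.
have pt_sing p : Sq_point R Q p -> subset p (fun x => R (Q x)).
  by move=> hp x; apply: (Sq_point_singular Hq hp).
have ln_sing L : Sq_line R Q L -> subset L (fun x => R (Q x)) by case.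
split; first exact: Pt_image.
split; first by move=> p p' /pt_sing hp /pt_sing hp'; apply: (image_same_setK pi_injS hp hp').
split.
  move=> p2 /Pt_lift [w [w_neq0 p2w Rw]]; have [p [hp pw]] := Sq_point_of_lift w_neq0 Rw.
  by exists p; split=> //; apply: (same_set_trans pw (same_set_sym p2w)).
split; first exact: Ln_image.
split; first by move=> L L' /ln_sing hL /ln_sing hL'; apply: (image_same_setK pi_injS hL hL').
split.
  move=> L2 /Ln_lift [a [b [ab_ind L2ab Ra Rb fab]]].
  have [L [hL Lab]] := Sq_line_of_lift ab_ind Ra Rb fab.
  by exists L; split=> //; apply: (same_set_trans Lab (same_set_sym L2ab)).
by move=> p L /pt_sing hp /ln_sing hL; apply: (image_subsetE pi_injS hp hL).
Qed.

Hypothesis HK : division_ring K.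

Lemma quotient_iso_nontrivial : nontrivial RU QU ->
  induces_iso pi (Sq_point R Q) (Sq_line R Q) (Sq_point RU QU) (Sq_line RU QU).
Proof.
move=> /nontrivial_proper RU_proper.
have HqU := quotient_gqf Hs Hq HU HUf Hpi_surj HQU HfU.
have Rsing_RU x : R (Q x) -> RU (QU (pi x)).
  by move=> Rx; apply/(quotient_singular Hs Hq HU HUf HQU)/(R_U_of_R Hq HU).
apply: induces_iso_of_lifts.
- move=> p /Sq_point_image [v [Rv pi_v_neq0 pv]].
  by exists (pi v); split=> //; apply: Rsing_RU.
- move=> L hL; split; first exact: Sq_line_image.
  by move=> _ [x [Lx <-]]; apply/Rsing_RU/(proj2 hL).
- by move=> p2 [w [w_neq0 p2w RUw]]; exists w.
- move=> L2 hL2; have [[a [b [ab_ind L2ab]]] L2_sing] := hL2.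
  have [L2a L2b] : L2 a /\ L2 b by split; apply/L2ab; [apply: span2_l | apply: span2_r].
  exists a, b; split=> //; [exact: L2_sing | exact: L2_sing |].
  exact: (Sq_line_isotropic Hs HqU HK RU_proper hL2 L2a L2b).
Qed.

Hypothesis Hnt : nontrivial R Q.

Lemma alternating_of_trivial_quotient : ~ nontrivial RU QU -> alternating f.
Proof.
move=> RU_triv x; have [RU_full | RU_proper] := classic (forall k, RU k).
  have [t ->] := form_trace Hq x.
  apply: (trace_zero_of_symmetrize Hs (gqf_codefect Hq) HK (nontrivial_proper Hnt)) => mu.
  exact: (R_U_symmetrize Hs Hq HUf mu (RU_full t)).
have HqU := quotient_gqf Hs Hq HU HUf Hpi_surj HQU HfU.
have RU_all := trivial_singular RU_triv.
apply: (eq0_of_proper_mulr HK RU_proper) => m; rewrite -(formZr Hs Hq) -HfU.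
exact: (form_mem_of_singular HqU (RU_all _) (RU_all _) (RU_all _)).
Qed.

Lemma quotient_iso_trivial : ~ nontrivial RU QU ->
  induces_iso pi (Sq_point R Q) (Sq_line R Q) (Sf_point fU) (Sf_line fU).
Proof.
move=> RU_triv; have RU_all := trivial_singular RU_triv.
have f_alt := alternating_of_trivial_quotient RU_triv.
apply: induces_iso_of_lifts.
- move=> p /Sq_point_image [v [_ pi_v_neq0 pv]].
  by exists (pi v); split=> //; rewrite HfU f_alt.
- move=> L hL; split; first exact: Sq_line_image.
  move=> _ _ [x [Lx <-]] [y [Ly <-]]; rewrite HfU.
  exact: (Sq_line_isotropic Hs Hq HK (nontrivial_proper Hnt) hL Lx Ly).
- by move=> p2 [w [w_neq0 p2w _]]; exists w.
- move=> L2 [[a [b [ab_ind L2ab]]] L2_iso]; exists a, b; split=> //.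
  by apply: L2_iso; apply/L2ab; [apply: span2_l | apply: span2_r].
Qed.

End Isomorphism.

Theorem mainTheorem14
  (K : unitRingType) (HK : division_ring K)
  (sigma : K -> K) (eps : K) (Hadm : admissible sigma eps)
  (V : lmodType K^c) (R : K -> Prop) (Q : V -> K) (f : V -> V -> K)
  (Hq : gen_quad_form sigma eps R Q f)
  (Hnt : nontrivial R Q)
  (Hspan : forall x : V, span_of (fun v => R (Q v)) x)
  (U : V -> Prop) (HU : subspace U)
  (HUf : forall x, U x -> Rad_f f x)
  (HUq : forall x, U x -> Rad_q R Q f x -> x = 0)
  (W : lmodType K^c) (pi : {linear V -> W})
  (Hpi_surj : forall w : W, exists x, pi x = w)
  (Hpi_ker : forall x, pi x = 0 <-> U x) :
  (exists (QU : W -> K) (fU : W -> W -> K),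
     (forall x, R_U R Q U (QU (pi x) - Q x)) /\
     (forall x y, fU (pi x) (pi y) = f x y)) /\
  (forall (QU : W -> K) (fU : W -> W -> K),
     (forall x, R_U R Q U (QU (pi x) - Q x)) ->
     (forall x y, fU (pi x) (pi y) = f x y) ->
     [/\ gen_quad_form sigma eps (R_U R Q U) QU fU,
         nontrivial (R_U R Q U) QU ->
           induces_iso pi (Sq_point R Q) (Sq_line R Q)
                          (Sq_point (R_U R Q U) QU) (Sq_line (R_U R Q U) QU) &
         ~ nontrivial (R_U R Q U) QU ->
           [/\ alternating f, alternating fU &
               induces_iso pi (Sq_point R Q) (Sq_line R Q)
                              (Sf_point fU) (Sf_line fU)]]).
Proof.
have Hs : anti_automorphism sigma by case: Hadm.
split; first exact: (quotient_form_exists Hs Hq HUf Hpi_ker Hpi_surj).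
move=> QU fU HQU HfU; split.
- exact: (quotient_gqf Hs Hq HU HUf Hpi_surj HQU HfU).
- exact: (quotient_iso_nontrivial Hs Hq HU HUf HUq Hpi_surj Hpi_ker HQU HfU HK).
- move=> RU_triv.
  have f_alt := alternating_of_trivial_quotient Hs Hq HU HUf Hpi_surj HQU HfU HK Hnt RU_triv.
  split=> //; first exact: (quotient_alternating Hpi_surj HfU f_alt).
  exact: (quotient_iso_trivial Hs Hq HU HUf HUq Hpi_surj Hpi_ker HQU HfU HK Hnt RU_triv).
Qed.
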